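(* Let $G=(V,E,d)$ be as in the context and suppose that $\alpha=\{1,\dots,k\}\subseteq V$ is a clique in $G$ (every pair $i<j$ in $\alpha$ satisfies $ij\in E$). Define $$\widehat\Omega:=\{X\in\mathcal{S}^n_{c,+}:\ \mathcal{K}(X)_{ij}=d_{ij}\ \text{ for all }1\le i<j\le k\},$$ and assume $\widehat\Omega\neq\emptyset$. Let $d_\alpha\in\mathcal{S}^k$ be the matrix with zero diagonal and $(d_\alpha)_{ij}=(d_\alpha)_{ji}=d_{ij}$ for $1\le i<j\le k$, and let $\mathcal{K}^\dagger d_\alpha:=-\tfrac12 J_k d_\alpha J_k$ where $J_k=I_k-\tfrac1k ee^T$ (this matrix lies in $\mathcal{S}^k_{c,+}$). Then for any matrix $\widehat Y\in\mathcal{S}^k$ exposing $\operatorname{face}(\mathcal{K}^\dagger d_\alpha;\mathcal{S}^k_{c,+})$, the $n\times n$ matrix $\begin{bmatrix}\widehat Y&0\\0&0\end{bmatrix}$ exposes $\operatorname{face}(\widehat\Omega;\mathcal{S}^n_{c,+})$.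
   Context: $G=(V,E,d)$: weighted undirected graph, $V=\{1,\dots,n\}$, $E\subseteq\{ij:1\le i<j\le n\}$, $d\in\mathbb{R}^E$ nonnegative. $\mathcal{S}^m$ is the space of real symmetric $m\times m$ matrices with trace inner product $\langle A,B\rangle=\operatorname{tr}(AB)$; $e$ is the all-ones vector of appropriate size. $\mathcal{K}:\mathcal{S}^n\to\mathcal{S}^n$ is defined by $\mathcal{K}(X)_{ij}=X_{ii}+X_{jj}-2X_{ij}$. $\mathcal{S}^m_{c,+}=\{X\in\mathcal{S}^m: X\succeq 0,\ Xe=0\}$ (centered PSD matrices). A face of $\mathcal{S}^m_{c,+}$ is a convex subset $F$ such that any line segment in $\mathcal{S}^m_{c,+}$ whose relative interior meets $F$ lies in $F$. For a convex set $\Omega\subseteq\mathcal{S}^m_{c,+}$ (or a single matrix), $\operatorname{face}(\Omega;\mathcal{S}^m_{c,+})$ is the smallest face of $\mathcal{S}^m_{c,+}$ containing $\Omega$. A matrix $Y$ exposes a face $F$ of $\mathcal{S}^m_{c,+}$ if $Y\succeq 0$, $Ye=0$, and $F=\{X\in\mathcal{S}^m_{c,+}:\langle X,Y\rangle=0\}$. *)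

From HB Require Import structures.
From mathcomp Require Import all_boot all_order all_algebra.
Set Implicit Arguments. Unset Strict Implicit. Unset Printing Implicit Defensive.
Import Order.TTheory GRing.Theory Num.Theory.
Local Open Scope ring_scope.

Section Defs.
Variable R : rcfType.

Definition symmx n (X : 'M[R]_n) : Prop := X^T = X.
Definition psd n (X : 'M[R]_n) : Prop :=
  symmx X /\ forall v : 'cV[R]_n, 0 <= (v^T *m X *m v) 0 0.

Definition centered n (X : 'M[R]_n) : Prop := X *m (const_mx 1 : 'cV[R]_n) = 0.

Definition Scp n (X : 'M[R]_n) : Prop := psd X /\ centered X.

Definition is_face n (F : 'M[R]_n -> Prop) : Prop :=
  (forall X, F X -> Scp X) /\
  (forall A B (t : R), F A -> F B -> 0 <= t <= 1 -> F ((1 - t) *: A + t *: B)) /\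
  (forall A B (t : R), Scp A -> Scp B -> 0 < t < 1 ->
      F ((1 - t) *: A + t *: B) -> F A /\ F B).

Definition face_of n (Om : 'M[R]_n -> Prop) : 'M[R]_n -> Prop :=
  fun X => forall F, is_face F -> (forall Z, Om Z -> F Z) -> F X.

Definition exposes n (Y : 'M[R]_n) (F : 'M[R]_n -> Prop) : Prop :=
  psd Y /\ centered Y /\ forall X, F X <-> (Scp X /\ \tr (X *m Y) = 0).

Definition Kop n (X : 'M[R]_n) : 'M[R]_n :=
  \matrix_(i, j) (X i i + X j j - 2 * X i j).

Definition Jmx k : 'M[R]_k := 1%:M - (k%:R)^-1 *: const_mx 1.
Definition Kdag k (D : 'M[R]_k) : 'M[R]_k := - (2^-1) *: (Jmx k *m D *m Jmx k).

(* d_alpha : the k x k zero-diagonal symmetric matrix built from d on the clique,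
   vertices of alpha being the first k vertices of 'I_(k+m) *)
Definition d_alpha k m (d : 'I_(k + m) -> 'I_(k + m) -> R) : 'M[R]_k :=
  \matrix_(i, j) (if (i < j)%N then d (lshift m i) (lshift m j)
                  else if (j < i)%N then d (lshift m j) (lshift m i) else 0).

Definition Omega_hat k m (d : 'I_(k + m) -> 'I_(k + m) -> R) (X : 'M[R]_(k + m)) : Prop :=
  Scp X /\ forall i j : 'I_(k + m), (i < j)%N -> (j < k)%N -> Kop X i j = d i j.

End Defs.

(* Write [phi X := J X_aa J] for the centred leading k x k block of [X].  Then
   [Omega_hat] is exactly the set of [X] in the cone with [phi X = D], where
   [D := Kdag d_alpha].
   Since [phi] is linear and maps the cone into the cone, the preimage of
   [face D] is a face containing [Omega_hat], so [phi] maps [face Omega_hat] into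
   [face D].  Conversely, if [phi X] lies in [face D] then [D - e phi X] is in the
   cone for some [e > 0], and [block (D - e phi X) + e X] is a point of
   [Omega_hat] that dominates [e X], which puts [X] in [face Omega_hat].  Finally
   [<X, block Yhat> = <phi X, Yhat>] because [Yhat J = Yhat]. *)

From HB Require Import structures.
From mathcomp Require Import all_boot all_order all_algebra.
From mathcomp Require Import ring.
Set Implicit Arguments. Unset Strict Implicit. Unset Printing Implicit Defensive.
Import Order.TTheory GRing.Theory Num.Theory.
Local Open Scope ring_scope.

Section CenteredPSDCone.
Variables (R : rcfType) (n : nat).
Implicit Types (a e t : R) (A B D X Z : 'M[R]_n) (F Om : 'M[R]_n -> Prop).

Lemma ScpD A B : Scp A -> Scp B -> Scp (A + B).
Proof.
move=> [[sA pA] cA] [[sB pB] cB]; split; first split.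
- by rewrite /symmx linearD /= sA sB.
- by move=> v; rewrite mulmxDr mulmxDl mxE addr_ge0.
- by rewrite /centered mulmxDl cA cB addr0.
Qed.

Lemma ScpZ a A : 0 <= a -> Scp A -> Scp (a *: A).
Proof.
move=> a0 [[sA pA] cA]; split; first split.
- by rewrite /symmx linearZ /= sA.
- by move=> v; rewrite -scalemxAr -scalemxAl mxE mulr_ge0.
- by rewrite /centered -scalemxAl cA scaler0.
Qed.

Lemma Scp0 : Scp (0 : 'M[R]_n).
Proof.
split; first split; rewrite /symmx ?trmx0 //; last by rewrite /centered mul0mx.
by move=> v; rewrite mulmx0 mul0mx mxE.
Qed.

Lemma Scp_convex A B t : Scp A -> Scp B -> 0 <= t <= 1 -> Scp ((1 - t) *: A + t *: B).
Proof. by move=> sA sB /andP[t0 t1]; apply: ScpD; apply: ScpZ; rewrite // subr_ge0. Qed.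

Lemma Scp_subZ D X e e' : Scp X -> Scp (D - e *: X) -> e' <= e -> Scp (D - e' *: X).
Proof.
move=> sX sD lee'; have -> : D - e' *: X = (D - e *: X) + (e - e') *: X.
  by apply/matrixP => i j; rewrite !mxE; ring.
by apply: ScpD => //; apply: ScpZ; rewrite ?subr_ge0.
Qed.

Lemma is_face_Scp : is_face (@Scp R n).
Proof. by split=> //; split=> [A B t *|//]; apply: Scp_convex. Qed.

Lemma face_of_is_face Om : (forall Z, Om Z -> Scp Z) -> is_face (face_of Om).
Proof.
move=> OmS; split; first by move=> X; apply; [apply: is_face_Scp | apply: OmS].
split=> [A B t FA FB t01 F faceF OmF | A B t sA sB t01 FAB].
  by case: (faceF) => _ [convF _]; apply: convF; [apply: FA | apply: FB |].
by split=> F faceF OmF; case: (faceF) => _ [_ extF];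
  have [] := extF A B t sA sB t01 (FAB F faceF OmF).
Qed.

(* For small [s > 0], [A = (1 - s) ((1 - s)^-1 (A - s X)) + s X] is a proper
   convex combination of two points of the cone. *)
Lemma face_dominated F A X e :
  is_face F -> F A -> Scp X -> 0 < e -> Scp (A - e *: X) -> F X.
Proof.
move=> [_ [_ extF]] FA sX e0 sAX.
pose s := Order.min e 2^-1.
have s0 : 0 < s by rewrite lt_min e0 invr_gt0 ltr0n.
have s1 : s < 1 by rewrite gt_min invf_lt1 ?ltr0n ?ltr1n ?orbT.
have sAsX : Scp (A - s *: X) by apply: Scp_subZ sX sAX _; rewrite ge_min lexx.
have s1' : 1 - s != 0 by rewrite subr_eq0 eq_sym lt_eqF.
have := extF ((1 - s)^-1 *: (A - s *: X)) X s.
rewrite scalerA mulfV // scale1r subrK => /(_ _ sX _ FA) [] //.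
- by apply: ScpZ sAsX; rewrite invr_ge0 subr_ge0 ltW.
- by rewrite s0 s1.
Qed.

Lemma is_face_dominated D :
  is_face (fun Z => Scp Z /\ exists2 e, 0 < e & Scp (D - e *: Z)).
Proof.
split; first by move=> ? [].
split=> [A B t [sA [eA eA0 hA]] [sB [eB eB0 hB]] t01 |
         A B t sA sB /andP[t0 t1] [_ [e e0 hAB]]].
  split; first exact: Scp_convex.
  exists (Order.min eA eB); first by rewrite lt_min eA0.
  have -> : D - Order.min eA eB *: ((1 - t) *: A + t *: B) =
      (1 - t) *: (D - Order.min eA eB *: A) + t *: (D - Order.min eA eB *: B).
    by apply/matrixP => i j; rewrite !mxE; ring.
  by apply: Scp_convex => //; [apply: Scp_subZ sA hA _ | apply: Scp_subZ sB hB _];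
    rewrite ge_min lexx ?orbT.
split; split=> //.
  exists (e * (1 - t)); first by rewrite mulr_gt0 // subr_gt0.
  have -> : D - (e * (1 - t)) *: A = (D - e *: ((1 - t) *: A + t *: B)) + (e * t) *: B.
    by apply/matrixP => i j; rewrite !mxE; ring.
  by apply: ScpD => //; apply: ScpZ; rewrite // mulr_ge0 // ltW.
exists (e * t); first by rewrite mulr_gt0.
have -> : D - (e * t) *: B = (D - e *: ((1 - t) *: A + t *: B)) + (e * (1 - t)) *: A.
  by apply/matrixP => i j; rewrite !mxE; ring.
by apply: ScpD => //; apply: ScpZ; rewrite // mulr_ge0 ?ltW // subr_gt0.
Qed.

Lemma face_of1_dominated D X : Scp D ->
  face_of (fun Z => Z = D) X -> exists2 e, 0 < e & Scp (D - e *: X).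
Proof.
move=> sD /(_ _ (is_face_dominated D)) [|_ //] Z ->; split=> //.
by exists 1; rewrite // scale1r subrr; apply: Scp0.
Qed.

End CenteredPSDCone.

Section FaceOfLinearImage.
Variables (R : rcfType) (p q : nat) (f : {linear 'M[R]_p -> 'M[R]_q}).
Hypothesis f_Scp : forall X, Scp X -> Scp (f X).

Lemma is_face_preim (F : 'M[R]_q -> Prop) :
  is_face F -> is_face (fun X => Scp X /\ F (f X)).
Proof.
move=> [_ [convF extF]]; split; first by move=> ? [].
split=> [A B t [sA FA] [sB FB] t01 | A B t sA sB t01 [_ FAB]].
  by split; [apply: Scp_convex | rewrite linearD !linearZ; apply: convF].
rewrite linearD !linearZ in FAB.
by have [FA FB] := extF _ _ _ (f_Scp sA) (f_Scp sB) t01 FAB.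
Qed.

Lemma face_of_linear_image (Om : 'M[R]_p -> Prop) (Om' : 'M[R]_q -> Prop) :
  (forall Z, Om Z -> Scp Z) -> (forall Z, Om' Z -> Scp Z) ->
  (forall Z, Om Z -> Om' (f Z)) -> forall X, face_of Om X -> face_of Om' (f X).
Proof.
move=> OmS Om'S fOm X /(_ _ (is_face_preim (face_of_is_face Om'S))) [] // Z OmZ.
by split; [apply: OmS | move=> F _; apply; apply: fOm].
Qed.

End FaceOfLinearImage.

Section CenteringMatrix.
Variables (R : rcfType) (k : nat).
Local Notation J := (Jmx R k).
Local Notation e := (const_mx 1 : 'cV[R]_k).
Implicit Types Y : 'M[R]_k.

Lemma mul_const_mx p q r :
  (const_mx 1 : 'M[R]_(p, q)) *m (const_mx 1 : 'M_(q, r)) = q%:R *: const_mx 1.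
Proof.
apply/matrixP => i j; rewrite !mxE.
under eq_bigr do rewrite !mxE mulr1.
by rewrite sumr_const card_ord mulr1.
Qed.

Lemma trmx_Jmx : J^T = J.
Proof. by rewrite /Jmx linearB linearZ /= trmx1 trmx_const. Qed.

Lemma Jmx_const : J *m e = 0.
Proof.
case: k => [|k']; first by rewrite flatmx0.
by rewrite /Jmx mulmxBl mul1mx -scalemxAl mul_const_mx scalerA mulVf ?pnatr_eq0 ?scale1r ?subrr.
Qed.

Lemma const_Jmx : e^T *m J = 0.
Proof. by rewrite -trmx_Jmx -trmx_mul Jmx_const trmx0. Qed.

Lemma Jmx_centered Y : symmx Y -> centered Y -> Y *m J = Y /\ J *m Y = Y.
Proof.
move=> sY cY; have YJ : Y *m J = Y.
  rewrite /Jmx; have -> : (const_mx 1 : 'M[R]_k) = e *m const_mx 1.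
    by rewrite mul_const_mx scale1r.
  by rewrite mulmxBr mulmx1 -scalemxAr mulmxA cY mul0mx scaler0 subr0.
by split=> //; apply: trmx_inj; rewrite trmx_mul trmx_Jmx sY.
Qed.

Lemma Scp_JmxMJ Y : psd Y -> Scp (J *m Y *m J).
Proof.
move=> [sY pY]; split; first split.
- by rewrite /symmx !trmx_mul trmx_Jmx sY mulmxA.
- by move=> v; have := pY (J *m v); rewrite trmx_mul trmx_Jmx !mulmxA.
- by rewrite /centered -mulmxA Jmx_const mulmx0.
Qed.

Lemma JmxMJE Y i j : (J *m Y *m J) i j =
  Y i j - k%:R^-1 * (\sum_l Y l j) - k%:R^-1 * (\sum_l Y i l)
  + k%:R^-1 * k%:R^-1 * (\sum_l \sum_l' Y l l').
Proof.
set c := k%:R^-1.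
have -> : J *m Y *m J = Y - c *: (const_mx 1 *m Y) - c *: (Y *m const_mx 1)
                        + (c * c) *: (const_mx 1 *m Y *m const_mx 1).
  rewrite /Jmx mulmxBl mul1mx mulmxBr mulmxBl mulmx1 -!scalemxAl -!scalemxAr.
  rewrite mulmx1 mulmxBl -scalemxAl.
  by apply/matrixP => a b; rewrite !mxE /c; ring.
rewrite !mxE; congr (_ - c * _ - c * _ + c * c * _).
- by apply: eq_bigr => l _; rewrite mxE mul1r.
- by apply: eq_bigr => l _; rewrite mxE mulr1.
- under eq_bigr do rewrite mxE mxE mulr1.
  rewrite exchange_big /=; apply: eq_bigr => l _.
  by apply: eq_bigr => l' _; rewrite mxE mul1r.
Qed.

(* Conjugating by [J] only adds terms of the form [u_i + v_j] with [u = v] for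
   symmetric [Y], and [Kop] kills exactly those. *)
Lemma Kop_JmxMJ Y : symmx Y -> Kop (J *m Y *m J) = Kop Y.
Proof.
move=> sY; apply/matrixP => i j; rewrite /Kop mxE [RHS]mxE !JmxMJE.
have sum_sym l' : \sum_l Y l l' = \sum_l Y l' l.
  by apply: eq_bigr => l _; rewrite -{1}sY mxE.
rewrite !sum_sym; ring.
Qed.

Lemma KopE Y : Kop Y = (\col_i Y i i) *m e^T + e *m (\col_i Y i i)^T - 2 *: Y.
Proof. by apply/matrixP => i j; rewrite !mxE !big_ord1 !mxE; ring. Qed.

Lemma Kdag_Kop Y : Kdag (Kop Y) = J *m Y *m J.
Proof.
rewrite /Kdag KopE; move: Jmx_const const_Jmx; move: J => J0 J0e eJ0.
rewrite mulmxBr mulmxDr mulmxBl mulmxDl !mulmxA J0e -[_ *m e^T *m J0]mulmxA eJ0.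
rewrite !mul0mx mulmx0 !add0r -scalemxAr -scalemxAl.
by rewrite scalerN scalerA mulNr mulVf ?pnatr_eq0 // scaleN1r opprK.
Qed.

Lemma Kop_Kdag Y : symmx Y -> (forall i, Y i i = 0) -> Kop (Kdag Y) = Y.
Proof.
move=> sY Y0; have KopZ a (M : 'M[R]_k) : Kop (a *: M) = a *: Kop M.
  by apply/matrixP => i j; rewrite !mxE; ring.
rewrite /Kdag KopZ Kop_JmxMJ //; apply/matrixP => i j; rewrite !mxE !Y0.
by rewrite addr0 sub0r mulrN mulNr opprK mulrA mulVf ?pnatr_eq0 // mul1r.
Qed.

End CenteringMatrix.

Definition center_ul (R : rcfType) (k m : nat) (X : 'M[R]_(k + m)) : 'M[R]_k :=
  Jmx R k *m ulsubmx X *m Jmx R k.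

Lemma center_ul_is_linear (R : rcfType) (k m : nat) : linear (@center_ul R k m).
Proof. by move=> a A B; rewrite /center_ul /ulsubmx !linearP mulmxDl -scalemxAl. Qed.

HB.instance Definition _ (R : rcfType) (k m : nat) :=
  GRing.isLinear.Build R _ _ _ (@center_ul R k m) (@center_ul_is_linear R k m).

Section LeadingBlock.
Variables (R : rcfType) (k m : nat).
Implicit Types (X : 'M[R]_(k + m)) (W Y : 'M[R]_k).

Lemma psd_ulsubmx X : psd X -> psd (ulsubmx X).
Proof.
move=> [sX pX]; split; first by rewrite /symmx trmx_ulsub sX.
move=> v; have := pX (col_mx v 0).
rewrite -{1}(submxK X) tr_col_mx trmx0 mul_row_block mul_row_col.
by rewrite !mul0mx !addr0 mulmx0 addr0.
Qed.

Lemma Scp_center_ul X : Scp X -> Scp (center_ul X).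
Proof. by move=> [pX _]; apply/Scp_JmxMJ/psd_ulsubmx. Qed.

Lemma Scp_block0 W : Scp W -> Scp (block_mx W 0 0 (0 : 'M_m)).
Proof.
move=> [[sW pW] cW]; split; first split.
- by rewrite /symmx tr_block_mx sW !trmx0.
- move=> v; rewrite -(vsubmxK v) tr_col_mx mul_row_block mul_row_col.
  by rewrite !mulmx0 !addr0 mul0mx addr0.
- by rewrite /centered -col_mx_const mul_block_col cW !mul0mx !addr0 col_mx0.
Qed.

Lemma center_ul_block0 W : Scp W -> center_ul (block_mx W 0 0 (0 : 'M_m)) = W.
Proof.
move=> [[sW _] cW]; have [WJ JW] := Jmx_centered sW cW.
by rewrite /center_ul block_mxKul JW WJ.
Qed.

Lemma mxtrace_mul_block0 X Y : symmx Y -> centered Y ->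
  \tr (X *m block_mx Y 0 0 (0 : 'M_m)) = \tr (center_ul X *m Y).
Proof.
move=> sY cY; have [YJ JY] := Jmx_centered sY cY.
rewrite -{1}(submxK X) mulmx_block mxtrace_block !mulmx0 !addr0 mxtrace0 addr0.
by rewrite /center_ul -mulmxA JY -mulmxA [RHS]mxtrace_mulC -mulmxA YJ.
Qed.

End LeadingBlock.

Section OmegaHat.
Variables (R : rcfType) (k m : nat) (d : 'I_(k + m) -> 'I_(k + m) -> R).

Lemma Omega_hat_Kop X : Omega_hat d X -> d_alpha d = Kop (ulsubmx X).
Proof.
move=> [[[sX _] _] KX]; apply/matrixP => i j; rewrite !mxE.
case: ltngtP => ij; last by rewrite (val_inj ij); ring.
- by rewrite -KX //= ?ltn_ord // !mxE.
- rewrite -KX //= ?ltn_ord // !mxE.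
  have -> : X (lshift m j) (lshift m i) = X (lshift m i) (lshift m j).
    by rewrite -{1}sX mxE.
  by ring.
Qed.

Lemma d_alpha_sym : symmx (d_alpha d).
Proof.
apply/matrixP => i j; rewrite !mxE.
by case: ltngtP => // ij; rewrite (val_inj ij).
Qed.

Lemma Omega_hatE X :
  Omega_hat d X <-> Scp X /\ center_ul X = Kdag (d_alpha d).
Proof.
split=> [OmX | [sX cX]].
  by split; [case: OmX | rewrite (Omega_hat_Kop OmX) Kdag_Kop].
split=> // i j ij jk; have ik := ltn_trans ij jk.
have [-> ->] : i = lshift m (Ordinal ik) /\ j = lshift m (Ordinal jk).
  by split; apply: val_inj.
have sU : symmx (ulsubmx X) by case: sX => [[sX _] _]; rewrite /symmx trmx_ulsub sX.
have : Kop (ulsubmx X) = d_alpha d.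
  rewrite -Kop_JmxMJ // -/(center_ul X) cX Kop_Kdag //; first exact: d_alpha_sym.
  by move=> l; rewrite mxE ltnn.
by move/matrixP/(_ (Ordinal ik) (Ordinal jk)); rewrite !mxE /= ij.
Qed.

End OmegaHat.

Theorem theorem3p1 (R : rcfType) (k m : nat)
  (E : 'I_(k + m) -> 'I_(k + m) -> bool) (d : 'I_(k + m) -> 'I_(k + m) -> R)
  (hE : forall i j, E i j -> (i < j)%N)
  (hd : forall i j, E i j -> 0 <= d i j)
  (hclique : forall i j : 'I_(k + m), (i < j)%N -> (j < k)%N -> E i j)
  (hne : exists X, Omega_hat d X)
  (Yhat : 'M[R]_k)
  (hY : exposes Yhat (face_of (fun Z => Z = Kdag (d_alpha d)))) :
  exposes (block_mx Yhat 0 0 (0 : 'M[R]_m)) (face_of (Omega_hat d)).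
Proof.
case: hY => psdY [cenY exposesY]; case: hne => X0 /Omega_hatE [sX0 cX0].
set D := Kdag (d_alpha d) in cX0 exposesY *.
have sD : Scp D by rewrite -cX0; apply: Scp_center_ul.
have OmS Z : Omega_hat d Z -> Scp Z by case.
have tr_block X : \tr (X *m block_mx Yhat 0 0 (0 : 'M_m)) = \tr (center_ul X *m Yhat).
  by apply: mxtrace_mul_block0 => //; case: psdY.
have [psdB cenB] := Scp_block0 m (conj psdY cenY).
split=> //; split=> // X; split=> [faceX | [sX trX]].
  have sX : Scp X by apply: (face_of_is_face OmS).1.
  split=> //; rewrite tr_block; apply: (proj2 ((exposesY _).1 _)).
  have DS (Z : 'M[R]_k) : Z = D -> Scp Z by move->.
  have OmD Z : Omega_hat d Z -> center_ul Z = D by case/Omega_hatE.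
  exact: (face_of_linear_image (@Scp_center_ul R k m) OmS DS OmD faceX).
have [e e0 sW] : exists2 e, 0 < e & Scp (D - e *: center_ul X).
  apply: face_of1_dominated sD _.
  by apply/(exposesY _); split; [apply: Scp_center_ul | rewrite -tr_block].
set W := D - e *: center_ul X in sW.
have OmA : Omega_hat d (block_mx W 0 0 0 + e *: X).
  apply/Omega_hatE; split; first by apply: ScpD; [apply: Scp_block0 | apply: ScpZ; rewrite ?ltW].
  by rewrite linearD linearZ /= center_ul_block0 // subrK.
move=> F faceF OmF; apply: (face_dominated faceF (OmF _ OmA) sX e0).
by rewrite addrK; apply: Scp_block0.
Qed.
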